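(* Let $\mu,\tau$ be distributions over $\{0,1\}^n$, let $T$ be a transfer distribution between $\mu$ and $\tau$ achieving $d_{EM}(\mu,\tau)=\mathbb{E}_{(x,y)\sim T}[d_H(x,y)]$, and let $\Xi$ be a distribution over $\{0,1\}^n\times\{0,1\}^n\times A$ ($A$ finite) with $\Xi|_{1,2}=T$. Let $\eta=\Xi|_3$, let $\Lambda^*$ be the type distribution of the detailing $\Xi|_{1,3}$ of $\mu$, and $\Upsilon^*$ the type distribution of the detailing $\Xi|_{2,3}$ of $\tau$. Then $d^\eta_{EM}(\Lambda^*,\Upsilon^* )\le d_{EM}(\mu,\tau)$.
   Context: $d_H$ is normalized Hamming distance and $d_{EM}(\mu,\tau)=\min_T\mathbb{E}_T[d_H]$ over transfer distributions (couplings with marginals $\mu,\tau$). For a detailing $\zeta$ (a distribution on $\{0,1\}^n\times A$), the type of $i\in[n]$ is $t_i(a)=\Pr_{x\sim\zeta|_1^{2:a}}[x_i=1]$ when $\zeta|_2(a)>0$ and $0$ otherwise, and the type distribution is the law of $t_{\mathbf i}$ for uniform $\mathbf i\in[n]$. $d^\eta_{\ell_1}(x,y)=\sum_a\eta(a)|x_a-y_a|$ and $d^\eta_{EM}$ is the Earth Mover distance over it. *)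

From mathcomp Require Import all_boot all_order all_algebra.
From mathcomp Require Import classical_sets reals.
Set Implicit Arguments. Unset Strict Implicit. Unset Printing Implicit Defensive.
Import Order.TTheory GRing.Theory Num.Theory.
Local Open Scope ring_scope.
Local Open Scope classical_set_scope.

Section Defs.
Variable R : realType.

Definition bvec (n : nat) := n.-tuple bool.

Definition dH (n : nat) (x y : bvec n) : R :=
  #|[set i : 'I_n | tnth x i != tnth y i]|%:R / n%:R.

Definition coupling_on (X : eqType) (P Q : X -> R) (pi : X -> X -> R)
  (s : seq (X * X)) : Prop :=
  [/\ uniq s,
      (forall x y, pi x y != 0 -> (x, y) \in s),
      (forall x y, 0 <= pi x y),
      (forall x, \sum_(p <- s | p.1 == x) pi p.1 p.2 = P x) &
      (forall y, \sum_(p <- s | p.2 == y) pi p.1 p.2 = Q y)].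

Definition dEM (X : eqType) (c : X -> X -> R) (P Q : X -> R) : R :=
  inf [set r | exists (pi : X -> X -> R) (s : seq (X * X)),
          coupling_on P Q pi s /\ r = \sum_(p <- s) pi p.1 p.2 * c p.1 p.2].

Definition dl1 (A : finType) (eta : A -> R) (v w : {ffun A -> R}) : R :=
  \sum_(a : A) eta a * `|v a - w a|.

Definition detail_marg2 (n : nat) (A : finType) (zeta : bvec n -> A -> R) (a : A) : R :=
  \sum_(x : bvec n) zeta x a.

Definition type_of (n : nat) (A : finType) (zeta : bvec n -> A -> R) (i : 'I_n)
  : {ffun A -> R} :=
  [ffun a => if 0 < detail_marg2 zeta a then
               (\sum_(x : bvec n | tnth x i) zeta x a) / detail_marg2 zeta a
             else 0].

Definition type_dist (n : nat) (A : finType) (zeta : bvec n -> A -> R)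
  (v : {ffun A -> R}) : R :=
  #|[set i : 'I_n | type_of zeta i == v]|%:R / n%:R.

End Defs.

From mathcomp Require Import all_boot all_order all_algebra.
From mathcomp Require Import classical_sets reals.
From mathcomp Require Import boolp.
Set Implicit Arguments. Unset Strict Implicit. Unset Printing Implicit Defensive.
Import Order.TTheory GRing.Theory Num.Theory.
Local Open Scope ring_scope.

(* Couple the two type distributions through a common uniform coordinate i,
   i.e. by the joint law of (t_i, u_i).  Since Xi restricts to both detailings,
   eta(a) |t_i(a) - u_i(a)| is the absolute value of an Xi-average of
   [x_i] - [y_i], hence at most the Xi-probability that x_i <> y_i at a.
   Summing over a and averaging over i gives the expected Hamming distance
   under the optimal T. *)

Section EarthMover.
Variables (R : realType) (X : eqType) (c : X -> X -> R).
Hypothesis c_ge0 : forall x y, 0 <= c x y.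

Lemma dEM_le_coupling_cost (P Q : X -> R) (pi : X -> X -> R) (s : seq (X * X)) :
  coupling_on P Q pi s -> dEM c P Q <= \sum_(p <- s) pi p.1 p.2 * c p.1 p.2.
Proof.
move=> cpl; apply: ge_inf; last by exists pi, s.
exists 0 => r [pi' [s' [[_ _ pi'_ge0 _ _] ->]]].
by apply: sumr_ge0 => p _; apply: mulr_ge0.
Qed.

End EarthMover.

Section EmpiricalCoupling.
Variables (R : realType) (X : eqType) (I : finType) (f g : I -> X).

Definition empirical_law (h : I -> X) (v : X) : R :=
  (\sum_i (h i == v)%:R) / #|I|%:R.

Definition empirical_coupling (v w : X) : R :=
  (\sum_i ((f i, g i) == (v, w))%:R) / #|I|%:R.

Definition empirical_support : seq (X * X) := undup [seq (f i, g i) | i <- enum I].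

Lemma mem_empirical_support i : (f i, g i) \in empirical_support.
Proof. by rewrite mem_undup; apply: map_f; rewrite mem_enum. Qed.

Lemma sum_empirical_coupling (P : pred (X * X)) (F : X * X -> R) :
  \sum_(p <- empirical_support | P p) empirical_coupling p.1 p.2 * F p
  = (\sum_i (if P (f i, g i) then F (f i, g i) else 0)) / #|I|%:R.
Proof.
under eq_bigr => p _ do rewrite mulrAC -surjective_pairing.
rewrite -big_distrl /=; congr (_ / _).
under eq_bigr => p _ do rewrite mulr_suml.
rewrite exchange_big /=; apply: eq_bigr => i _.
rewrite big_mkcond /= (bigD1_seq (f i, g i)) ?mem_empirical_support ?undup_uniq //=.
rewrite eqxx mul1r big1 ?addr0 => [|p /negbTE ne]; first by case: (P _).
by rewrite eq_sym ne mul0r; case: (P p).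
Qed.

Lemma empirical_couplingP :
  coupling_on (empirical_law f) (empirical_law g) empirical_coupling empirical_support.
Proof.
split; first exact: undup_uniq.
- move=> v w; apply: contraR => notin; rewrite /empirical_coupling big1 ?mul0r //.
  by move=> i _; case: eqP => // eq_vw; rewrite -eq_vw mem_empirical_support in notin.
- by move=> v w; rewrite divr_ge0 ?sumr_ge0 // => i _; rewrite ler0n.
- move=> v; under eq_bigr do rewrite -[empirical_coupling _ _]mulr1.
  rewrite (sum_empirical_coupling (fun p => p.1 == v) (fun _ => 1)).
  by congr (_ / _); apply: eq_bigr => i _; case: eqP.
- move=> w; under eq_bigr do rewrite -[empirical_coupling _ _]mulr1.
  rewrite (sum_empirical_coupling (fun p => p.2 == w) (fun _ => 1)).
  by congr (_ / _); apply: eq_bigr => i _; case: eqP.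
Qed.

Lemma dEM_empirical_le (c : X -> X -> R) : (forall x y, 0 <= c x y) ->
  dEM c (empirical_law f) (empirical_law g) <= (\sum_i c (f i) (g i)) / #|I|%:R.
Proof.
move=> c_ge0; apply: le_trans (dEM_le_coupling_cost c_ge0 empirical_couplingP) _.
by rewrite (sum_empirical_coupling xpredT (fun p => c p.1 p.2)).
Qed.

End EmpiricalCoupling.

Lemma card_classical_setE (R : realType) (I : finType) (Q : pred I) :
  #|([set i | Q i])%classic|%:R = \sum_i (Q i)%:R :> R.
Proof.
rewrite -sum1_card natr_sum big_mkcond /=; apply: eq_bigr => i _.
by rewrite /in_mem /= /in_set asboolb; case: (Q i).
Qed.

Lemma type_distE (R : realType) (n : nat) (A : finType) (zeta : bvec n -> A -> R) :
  type_dist zeta = empirical_law R (type_of zeta).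
Proof.
by apply: funext => v; rewrite /type_dist /empirical_law card_classical_setE card_ord.
Qed.

Lemma dH_sumE (R : realType) (n : nat) (x y : bvec n) :
  dH R x y = (\sum_i (tnth x i != tnth y i)%:R) / n%:R.
Proof. by rewrite /dH card_classical_setE. Qed.

Lemma expected_dH_sumE (R : realType) (n : nat) (w : bvec n -> bvec n -> R) :
  \sum_x \sum_y w x y * dH R x y
  = (\sum_i \sum_x \sum_y w x y * (tnth x i != tnth y i)%:R) / n%:R.
Proof.
rewrite [in RHS]exchange_big mulr_suml; apply: eq_bigr => x _.
rewrite [in RHS]exchange_big mulr_suml; apply: eq_bigr => y _.
by rewrite dH_sumE mulrA mulr_sumr.
Qed.

Section Types.
Variables (R : realType) (n : nat) (A : finType).

Lemma marg_mul_type_of (zeta : bvec n -> A -> R) i a :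
  (forall x, 0 <= zeta x a) ->
  detail_marg2 zeta a * type_of zeta i a = \sum_(x | tnth x i) zeta x a.
Proof.
move=> zeta_ge0; rewrite ffunE; case: ifP => [m_gt0|m_le0].
  by rewrite mulrCA divff ?mulr1 ?gt_eqF.
have m0 : detail_marg2 zeta a = 0.
  by apply/eqP; rewrite eq_le leNgt m_le0 sumr_ge0.
rewrite mulr0 big1 // => x _.
by move/eqP: m0; rewrite psumr_eq0 // => /allP/(_ x (mem_index_enum x))/eqP.
Qed.

Variables (Xi : bvec n -> bvec n -> A -> R).
Hypothesis Xi_ge0 : forall x y a, 0 <= Xi x y a.

Let eta a := \sum_x \sum_y Xi x y a.
Let zeta13 x a := \sum_y Xi x y a.
Let zeta23 y a := \sum_x Xi x y a.

(* Both detailings have third marginal eta, so eta a cancels the normalisation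
   in both types at once. *)
Lemma type_gap_le i a :
  eta a * `|type_of zeta13 i a - type_of zeta23 i a|
  <= \sum_x \sum_y Xi x y a * (tnth x i != tnth y i)%:R.
Proof.
have eta_ge0 : 0 <= eta a by do 2!apply: sumr_ge0 => ? _.
have bitsE (h : bvec n -> bvec n -> bvec n) :
    \sum_x \sum_y Xi x y a * (tnth (h x y) i)%:R
    = \sum_x \sum_y (if tnth (h x y) i then Xi x y a else 0).
  by do 2![apply: eq_bigr => ? _]; case: ifP; rewrite ?mulr1 ?mulr0.
have first_bitE : eta a * type_of zeta13 i a = \sum_x \sum_y Xi x y a * (tnth x i)%:R.
  rewrite -[eta a]/(detail_marg2 zeta13 a).
  rewrite (marg_mul_type_of i (fun x => sumr_ge0 _ (fun y _ => Xi_ge0 x y a))).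
  rewrite (bitsE (fun x _ => x)) big_mkcond; apply: eq_bigr => x _.
  by case: ifP => //; rewrite big1.
have second_bitE : eta a * type_of zeta23 i a = \sum_x \sum_y Xi x y a * (tnth y i)%:R.
  have -> : eta a = detail_marg2 zeta23 a by rewrite /eta exchange_big.
  rewrite (marg_mul_type_of i (fun y => sumr_ge0 _ (fun x _ => Xi_ge0 x y a))).
  rewrite (bitsE (fun _ y => y)) [RHS]exchange_big big_mkcond; apply: eq_bigr => y _.
  by case: ifP => //; rewrite big1.
rewrite -(ger0_norm eta_ge0) -normrM mulrBr first_bitE second_bitE.
rewrite -sumrB; apply: le_trans (ler_norm_sum _ _ _) _; apply: ler_sum => x _.
rewrite -sumrB; apply: le_trans (ler_norm_sum _ _ _) _; apply: ler_sum => y _.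
rewrite -mulrBr normrM ger0_norm //.
by case: (tnth x i); case: (tnth y i); rewrite /= ?subrr ?subr0 ?sub0r ?normrN ?normr0 ?normr1.
Qed.

Lemma dl1_type_le i :
  dl1 eta (type_of zeta13 i) (type_of zeta23 i)
  <= \sum_x \sum_y (\sum_a Xi x y a) * (tnth x i != tnth y i)%:R.
Proof.
under [X in _ <= X]eq_bigr => x _ do under eq_bigr => y _ do rewrite mulr_suml.
under [X in _ <= X]eq_bigr => x _ do rewrite exchange_big.
by rewrite exchange_big; apply: ler_sum => a _; apply: type_gap_le.
Qed.

End Types.

Theorem lemma5p5 (R : realType) (n : nat) (A : finType)
  (mu tau : bvec n -> R) (T : bvec n -> bvec n -> R)
  (Xi : bvec n -> bvec n -> A -> R) :
  (0 < n)%N ->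
  (forall x, 0 <= mu x) -> \sum_x mu x = 1 ->
  (forall x, 0 <= tau x) -> \sum_x tau x = 1 ->
  (* T is a transfer distribution between mu and tau *)
  (forall x y, 0 <= T x y) ->
  (forall x, \sum_y T x y = mu x) ->
  (forall y, \sum_x T x y = tau y) ->
  (* T achieves the Earth Mover distance *)
  \sum_x \sum_y T x y * dH R x y = dEM (@dH R n) mu tau ->
  (* Xi is a distribution on {0,1}^n x {0,1}^n x A with Xi|_{1,2} = T *)
  (forall x y a, 0 <= Xi x y a) ->
  (forall x y, \sum_a Xi x y a = T x y) ->
  let eta := fun a => \sum_x \sum_y Xi x y a in
  let zeta13 := fun x a => \sum_y Xi x y a in
  let zeta23 := fun y a => \sum_x Xi x y a in
  dEM (dl1 eta) (type_dist zeta13) (type_dist zeta23) <= dEM (@dH R n) mu tau.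
Proof.
move=> _ _ _ _ _ _ _ _ T_opt Xi_ge0 XiT; cbv zeta.
set eta := fun a : A => \sum_x \sum_y Xi x y a.
have dl1_ge0 v w : 0 <= dl1 eta v w.
  by apply: sumr_ge0 => a _; apply: mulr_ge0 => //; do 2!apply: sumr_ge0 => ? _.
rewrite !type_distE; apply: le_trans (dEM_empirical_le _ _ dl1_ge0) _.
rewrite card_ord -T_opt expected_dH_sumE.
rewrite ler_wpM2r ?invr_ge0 ?ler0n //; apply: ler_sum => i _.
by under [X in _ <= X]eq_bigr => x _ do under eq_bigr => y _ do rewrite -XiT; apply: dl1_type_le.
Qed.
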